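(* Let $K\ge2$ and $\alpha\in\mathbb{R}$. The function $-S_\alpha$ is $C_{\alpha,K}$-strongly convex with respect to $\|\cdot\|_1$ on $\operatorname{relint}(\Delta^K)$, i.e. for all $p,q\in\operatorname{relint}(\Delta^K)$, \[ -S_\alpha(p)\ \ge\ -S_\alpha(q)+\langle\nabla(-S_\alpha)(q),p-q\rangle+\frac{C_{\alpha,K}}{2}\|p-q\|_1^2, \] and $C_{\alpha,K}$ is the largest constant for which this holds. Here $C_{\alpha,K}=2^{1-\alpha}$ if $\alpha\le 1$; $C_{\alpha,K}=K^{1-\alpha}$ if $\alpha\in(1,2]$ and $K$ even; $C_{\alpha,K}=K^{1-\alpha}\left(\frac{(1-\frac1K)^{\frac{1-\alpha}{3-\alpha}}+(1+\frac1K)^{\frac{1-\alpha}{3-\alpha}}}{2}\right)^{3-\alpha}$ if $\alpha\in(1,2]$ and $K$ odd; $C_{\alpha,K}=2^{1-\max\{\alpha,3\}}$ if $\alpha>2$ and $K=2$; and $C_{\alpha,K}=0$ if $\alpha>2$ and $K\ge3$.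
   Context: $\Delta^K=\{p\in[0,1]^K:\sum_k p_k=1\}$, $\operatorname{relint}(\Delta^K)=\Delta^K\cap(0,1)^K$. For $p\in(0,+\infty)^K$: $S_\alpha(p)=\frac{\sum_k p_k^\alpha}{\alpha(1-\alpha)}$ if $\alpha\notin\{0,1\}$, $S_0(p)=\sum_k\ln p_k$, $S_1(p)=-\sum_k p_k\ln p_k$. $\|x\|_1=\sum_k|x_k|$. *)

From Stdlib Require Import Reals Lra Lia Arith.
From Coquelicot Require Import Coquelicot.
Open Scope R_scope.

(* Vectors in R^K are represented as functions nat -> R; only the
   coordinates 0 .. K-1 are ever used. *)

Fixpoint sumK (n : nat) (f : nat -> R) : R :=
  match n with
  | O => 0
  | S m => sumK m f + f m
  end.

Definition in_relint (K : nat) (p : nat -> R) : Prop :=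
  (forall k, (k < K)%nat -> 0 < p k < 1) /\ sumK K p = 1.

Definition S_alpha (alpha : R) (K : nat) (p : nat -> R) : R :=
  if Req_EM_T alpha 0 then sumK K (fun k => ln (p k))
  else if Req_EM_T alpha 1 then - sumK K (fun k => p k * ln (p k))
  else sumK K (fun k => Rpower (p k) alpha) / (alpha * (1 - alpha)).

Definition upd (q : nat -> R) (k : nat) (t : R) : nat -> R :=
  fun j => if Nat.eqb j k then t else q j.

Definition partial (F : (nat -> R) -> R) (q : nat -> R) (k : nat) : R :=
  Derive (fun t => F (upd q k t)) (q k).

Definition grad_dot (K : nat) (F : (nat -> R) -> R) (q x : nat -> R) : R :=
  sumK K (fun k => partial F q k * x k).

Definition norm1 (K : nat) (x : nat -> R) : R := sumK K (fun k => Rabs (x k)).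

Definition negS_strongly_convex (alpha : R) (K : nat) (C : R) : Prop :=
  forall p q : nat -> R, in_relint K p -> in_relint K q ->
    - S_alpha alpha K p >=
      - S_alpha alpha K q
      + grad_dot K (fun r => - S_alpha alpha K r) q (fun k => p k - q k)
      + C / 2 * (norm1 K (fun k => p k - q k)) ^ 2.

Definition C_const (alpha : R) (K : nat) : R :=
  if Rle_dec alpha 1 then Rpower 2 (1 - alpha)
  else if Rle_dec alpha 2 then
    (if Nat.even K then Rpower (INR K) (1 - alpha)
     else
       let e := (1 - alpha) / (3 - alpha) in
       Rpower (INR K) (1 - alpha) *
       Rpower ((Rpower (1 - 1 / INR K) e + Rpower (1 + 1 / INR K) e) / 2)
              (3 - alpha))
  else if Nat.eqb K 2 then Rpower 2 (1 - Rmax alpha 3)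
  else 0.

From Stdlib Require Import Reals Lra Lia.
From Coquelicot Require Import Coquelicot.
Open Scope R_scope.

(* Write -S_alpha(p) = sum_k phi_alpha(p_k).  In every case phi_alpha''(t) = t^(alpha-2), so
   along segments the second derivative of -S_alpha is the quadratic form
   Q_r(x) = sum_k r_k^(alpha-2) x_k^2, and -S_alpha is C-strongly convex on relint(Delta^K)
   exactly when C |x|_1^2 <= Q_r(x) for every r in relint(Delta^K) and every x with
   sum_k x_k = 0 (Taylor's formula in one direction, shrinking the step in the other).

   Lower bound: split the coordinates by the sign of x.  Each part carries |x|_1 / 2, so
   Cauchy-Schwarz gives Q_r(x) >= |x|_1^2 / 4 * (1/A + 1/B), where A and B are the sums of
   r_k^(2-alpha) over the two parts.  If the parts have masses a + b = 1 and sizes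
   m + n = K, then A <= a^(2-alpha) by superadditivity when alpha <= 1, and
   A <= m (a/m)^(2-alpha) by Jensen when 1 < alpha <= 2; Jensen for t^(3-alpha) then gives
   1/A + 1/B >= (m^e + n^e)^(3-alpha) with e = (1-alpha)/(3-alpha), which is smallest for
   m = floor(K/2).  For alpha > 2 the case K = 2 is a one-variable inequality, and for
   K >= 3 the constant is 0.

   Optimality: Q_r is evaluated at the equality cases, namely two blocks with masses
   proportional to m^e and n^e, two coordinates close to 1/2, or two tiny coordinates,
   whose weights r_k^(alpha-2) vanish in the limit when alpha > 2. *)

(** * Real functions of one variable and finite sums *)

Lemma Rpower_gt0 x p : 0 < Rpower x p.
Proof. exact (exp_pos _). Qed.

Lemma Rpower_1_l p : Rpower 1 p = 1.
Proof. unfold Rpower; rewrite ln_1, Rmult_0_r; exact exp_0. Qed.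

Lemma Rpower_2_2 : Rpower 2 2 = 4.
Proof. replace 2 with (INR 2) at 2 by (simpl; ring); rewrite Rpower_pow by lra; ring. Qed.
Lemma Rpower_le_antitone p y z : p <= 0 -> 0 < y <= z -> Rpower z p <= Rpower y p.
Proof.
  intros Hp Hyz.
  rewrite <- (Ropp_involutive p), (Rpower_Ropp z), (Rpower_Ropp y).
  apply Rinv_le_contravar; [apply Rpower_gt0 | apply Rle_Rpower_l; lra].
Qed.

Lemma is_derive_Rpower p x : 0 < x -> is_derive (fun t => Rpower t p) x (p * Rpower x (p - 1)).
Proof. intros; apply is_derive_Reals, derivable_pt_lim_power; assumption. Qed.

Lemma Derive_Rpower p x : 0 < x -> Derive (fun t => Rpower t p) x = p * Rpower x (p - 1).
Proof. intros Hx; apply is_derive_unique, is_derive_Rpower, Hx. Qed.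
Lemma ex_derive_Rpower p x : 0 < x -> ex_derive (fun t => Rpower t p) x.
Proof. intros Hx; eexists; apply is_derive_Rpower, Hx. Qed.
Lemma continuity_pt_of_ex_derive (f : R -> R) x : ex_derive f x -> continuity_pt f x.
Proof.
  intros Hf; apply continuity_pt_filterlim.
  apply (ex_derive_continuous (K := R_AbsRing) (V := R_NormedModule) f), Hf.
Qed.

Lemma le_of_derive_nonneg (f df : R -> R) (a b : R) : a <= b ->
  (forall y, a <= y <= b -> is_derive f y (df y)) ->
  (forall y, a <= y <= b -> 0 <= df y) -> f a <= f b.
Proof.
  intros Hab Hd Hpos.
  destruct (MVT_gen f a b df) as (c & Hc & Hfc); rewrite ?Rmin_left, ?Rmax_right in * by lra.
  - intros y Hy; apply Hd; lra.
  - intros y Hy; apply continuity_pt_of_ex_derive; exists (df y); apply Hd; lra.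
  - assert (0 <= df c * (b - a)) by (apply Rmult_le_pos; [apply Hpos | ]; lra).
    lra.
Qed.

Lemma tangent_le_of_derive2_nonneg (f df ddf : R -> R) (a b : R) :
  (forall y, Rmin a b <= y <= Rmax a b ->
     is_derive f y (df y) /\ is_derive df y (ddf y) /\ 0 <= ddf y) ->
  f a + df a * (b - a) <= f b.
Proof.
  intros H.
  set (h t := f t - df a * t).
  assert (Hh : forall y, Rmin a b <= y <= Rmax a b -> is_derive h y (df y - df a)).
  { intros y Hy; replace (df y - df a) with (minus (df y) (df a * 1))
      by (unfold minus, plus, opp; simpl; ring).
    apply (is_derive_minus f (fun t => df a * t)); [apply H, Hy |].
    apply is_derive_scal; exact (is_derive_id y). }
  assert (Hmono : forall y z, Rmin a b <= y <= z -> z <= Rmax a b -> df y <= df z).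
  { intros y z Hyz Hz; apply (le_of_derive_nonneg df ddf); [lra | |]; intros w Hw; apply H; lra. }
  enough (h a <= h b) by (unfold h in *; lra).
  destruct (Rle_dec a b) as [Hab | Hba].
  - apply (le_of_derive_nonneg h (fun y => df y - df a)); [exact Hab | |].
    + intros y Hy; apply Hh; rewrite Rmin_left, Rmax_right; lra.
    + intros y Hy; pose proof (Hmono a y); rewrite Rmin_left, Rmax_right in *; lra.
  - apply Ropp_le_cancel.
    apply (le_of_derive_nonneg (fun t => - h t) (fun y => - (df y - df a))); [lra | |].
    + intros y Hy; apply (is_derive_opp h), Hh; rewrite Rmin_right, Rmax_left; lra.
    + intros y Hy; pose proof (Hmono y a); rewrite Rmin_right, Rmax_left in *; lra.
Qed.

Lemma taylor2_lower (f df ddf : R -> R) (M : R) :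
  (forall s, 0 <= s <= 1 -> is_derive f s (df s) /\ is_derive df s (ddf s) /\ M <= ddf s) ->
  f 0 + df 0 + M / 2 <= f 1.
Proof.
  intros H.
  enough (f 0 - M / 2 * 0 ^ 2 + (df 0 - M * 0) * (1 - 0) <= f 1 - M / 2 * 1 ^ 2) by lra.
  apply (tangent_le_of_derive2_nonneg (fun s => f s - M / 2 * s ^ 2) (fun s => df s - M * s)
           (fun s => ddf s - M)).
  rewrite Rmin_left, Rmax_right by lra; intros s Hs.
  destruct (H s Hs) as (Hf & Hdf & HM); split; [| split; [| lra]].
  - auto_derive; [eexists; exact Hf |].
    (erewrite is_derive_unique by exact Hf); field.
  - auto_derive; [eexists; exact Hdf |].
    (erewrite is_derive_unique by exact Hdf); ring.
Qed.
Lemma taylor2_upper (f df ddf : R -> R) (L : R) :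
  (forall s, 0 <= s <= 1 -> is_derive f s (df s) /\ is_derive df s (ddf s) /\ ddf s <= L) ->
  f 1 <= f 0 + df 0 + L / 2.
Proof.
  intros H.
  enough (- f 0 + - df 0 + - L / 2 <= - f 1) by lra.
  apply (taylor2_lower (fun s => - f s) (fun s => - df s) (fun s => - ddf s)).
  intros s Hs; destruct (H s Hs) as (Hf & Hdf & HL).
  split; [apply (is_derive_opp f), Hf | split; [apply (is_derive_opp df), Hdf | lra]].
Qed.
Lemma is_derive_comp_affine (f : R -> R) (df c d s : R) :
  is_derive f (c + s * d) df -> is_derive (fun t => f (c + t * d)) s (df * d).
Proof.
  intros Hf; rewrite Rmult_comm.
  apply (is_derive_comp f (fun t => c + t * d)); [exact Hf | auto_derive; [exact I | ring]].
Qed.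
Lemma le_of_local_sup c (g : R -> R) t0 : 0 < t0 -> continuity_pt g 0 ->
  (forall t L, 0 < t < t0 -> (forall s, 0 <= s <= t -> g s <= L) -> c <= L) -> c <= g 0.
Proof.
  intros Ht0 Hg H; apply Rle_plus_epsilon; intros eps Heps.
  destruct (Hg eps Heps) as (d & Hd & Hgd).
  pose proof (Rmin_pos d t0 Hd Ht0); pose proof (Rmin_l d t0); pose proof (Rmin_r d t0).
  apply (H (Rmin d t0 / 2)); [lra |].
  intros s Hs; destruct (Req_dec s 0) as [-> | Hs0]; [lra |].
  assert (Hgs : R_dist (g s) (g 0) < eps).
  { apply Hgd; split; [split; [exact I | congruence] |].
    simpl; unfold R_dist; rewrite Rabs_right; lra. }
  unfold R_dist in Hgs; apply Rabs_def2 in Hgs; lra.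
Qed.
Lemma Rpower_tangent_le p S t : (p <= 0 \/ 1 <= p) -> 0 < S -> 0 < t ->
  Rpower S p + p * Rpower S (p - 1) * (t - S) <= Rpower t p.
Proof.
  intros Hp HS Ht.
  apply (tangent_le_of_derive2_nonneg (fun y => Rpower y p) (fun y => p * Rpower y (p - 1))
           (fun y => p * ((p - 1) * Rpower y (p - 1 - 1)))).
  intros y Hy.
  assert (Hy0 : 0 < y) by (pose proof (Rmin_glb_lt S t 0); lra).
  split; [| split].
  - apply is_derive_Rpower, Hy0.
  - apply is_derive_scal, is_derive_Rpower, Hy0.
  - rewrite <- Rmult_assoc; apply Rmult_le_pos; [| left; apply Rpower_gt0]; nra.
Qed.

Lemma Rpower_le_tangent p S t : 0 <= p <= 1 -> 0 < S -> 0 < t ->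
  Rpower t p <= Rpower S p + p * Rpower S (p - 1) * (t - S).
Proof.
  intros Hp HS Ht.
  enough (- Rpower S p + - (p * Rpower S (p - 1)) * (t - S) <= - Rpower t p) by lra.
  apply (tangent_le_of_derive2_nonneg (fun y => - Rpower y p) (fun y => - (p * Rpower y (p - 1)))
           (fun y => - (p * ((p - 1) * Rpower y (p - 1 - 1))))).
  intros y Hy.
  assert (Hy0 : 0 < y) by (pose proof (Rmin_glb_lt S t 0); lra).
  split; [| split].
  - apply (is_derive_opp (fun y => Rpower y p)), is_derive_Rpower, Hy0.
  - apply (is_derive_opp (fun y => p * Rpower y (p - 1))), is_derive_scal, is_derive_Rpower, Hy0.
  - pose proof (Rpower_gt0 y (p - 1 - 1)).
    assert (0 <= p * (1 - p) * Rpower y (p - 1 - 1)) by (apply Rmult_le_pos; nra).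
    lra.
Qed.

Lemma Rpower_jensen2 p u v a b : 1 <= p -> 0 < u -> 0 < v -> 0 < a -> 0 < b -> a + b = 1 ->
  Rpower (u + v) p <= a * Rpower (u / a) p + b * Rpower (v / b) p.
Proof.
  intros Hp Hu Hv Ha Hb Hab.
  pose proof (Rpower_tangent_le p (u + v) (u / a) (or_intror Hp) ltac:(lra)
                ltac:(apply Rdiv_lt_0_compat; lra)) as Tu.
  pose proof (Rpower_tangent_le p (u + v) (v / b) (or_intror Hp) ltac:(lra)
                ltac:(apply Rdiv_lt_0_compat; lra)) as Tv.
  apply (Rmult_le_compat_l a) in Tu; [| lra]; apply (Rmult_le_compat_l b) in Tv; [| lra].
  set (D := p * Rpower (u + v) (p - 1)) in *.
  assert (E : a * (Rpower (u + v) p + D * (u / a - (u + v)))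
              + b * (Rpower (u + v) p + D * (v / b - (u + v))) = Rpower (u + v) p)
    by (replace b with (1 - a) in * by lra; field; lra).
  lra.
Qed.

Lemma sumK_ext n f g : (forall k, (k < n)%nat -> f k = g k) -> sumK n f = sumK n g.
Proof.
  induction n as [| n IH]; intros H; cbn [sumK]; [reflexivity |].
  rewrite IH, H; [reflexivity | lia | intros; apply H; lia].
Qed.

Lemma sumK_plus n f g : sumK n (fun k => f k + g k) = sumK n f + sumK n g.
Proof. induction n as [| n IH]; cbn [sumK]; [ring | rewrite IH; ring]. Qed.

Lemma sumK_scal n c f : sumK n (fun k => c * f k) = c * sumK n f.
Proof. induction n as [| n IH]; cbn [sumK]; [ring | rewrite IH; ring]. Qed.

Lemma sumK_const n c : sumK n (fun _ => c) = INR n * c.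
Proof. induction n as [| n IH]; cbn [sumK]; [simpl; ring | rewrite IH, S_INR; ring]. Qed.

Lemma sumK_le n f g : (forall k, (k < n)%nat -> f k <= g k) -> sumK n f <= sumK n g.
Proof.
  induction n as [| n IH]; intros H; cbn [sumK]; [lra |].
  apply Rplus_le_compat; [apply IH; intros; apply H | apply H]; lia.
Qed.

Lemma sumK_nonneg n f : (forall k, (k < n)%nat -> 0 <= f k) -> 0 <= sumK n f.
Proof. intros H; rewrite <- (Rmult_0_r (INR n)), <- sumK_const; apply sumK_le, H. Qed.

Lemma sumK_app m j f : sumK (m + j) f = sumK m f + sumK j (fun i => f (m + i)%nat).
Proof.
  induction j as [| j IH]; [rewrite Nat.add_0_r; cbn [sumK]; ring |].
  rewrite Nat.add_succ_r; cbn [sumK]; rewrite IH; ring.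
Qed.

Lemma is_derive_sumK n (f : nat -> R -> R) (df : nat -> R) (x : R) :
  (forall k, (k < n)%nat -> is_derive (f k) x (df k)) ->
  is_derive (fun t => sumK n (fun k => f k t)) x (sumK n df).
Proof.
  induction n as [| n IH]; intros H; cbn [sumK].
  - exact (is_derive_const 0 x).
  - apply (is_derive_plus (fun t => sumK n (fun k => f k t)) (f n));
      [apply IH; intros k Hk | ]; apply H; lia.
Qed.

Lemma sumK_upd n f q k t : (k < n)%nat ->
  sumK n (fun j => f (upd q k t j)) = sumK n (fun j => f (q j)) + (f t - f (q k)).
Proof.
  unfold upd; induction n as [| n IH]; intros Hk; [lia | cbn [sumK]].
  destruct (Nat.eq_dec k n) as [-> | Hkn].
  - rewrite Nat.eqb_refl, (sumK_ext n _ (fun j => f (q j))); [ring |].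
    intros j Hj; destruct (Nat.eqb_spec j n); [lia | reflexivity].
  - destruct (Nat.eqb_spec n k); [lia |]; rewrite IH by lia; ring.
Qed.

Lemma exists_lower_bound n f : (forall k, (k < n)%nat -> 0 < f k) ->
  exists d, 0 < d /\ forall k, (k < n)%nat -> d <= f k.
Proof.
  induction n as [| n IH]; intros Hf; [exists 1; split; [lra | intros; lia] |].
  destruct IH as (d & Hd & Hdf); [intros k Hk; apply Hf; lia |].
  exists (Rmin d (f n)); split; [apply Rmin_pos; [exact Hd | apply Hf; lia] |].
  intros k Hk; destruct (Nat.eq_dec k n) as [-> | Hkn]; [apply Rmin_r |].
  apply (Rle_trans _ d); [apply Rmin_l | apply Hdf; lia].
Qed.
Definition sum_on (n : nat) (P : nat -> bool) (f : nat -> R) : R :=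
  sumK n (fun k => if P k then f k else 0).

Section SumOn.

Variables (n : nat) (P : nat -> bool).

Lemma sum_on_compl f : sum_on n P f + sum_on n (fun k => negb (P k)) f = sumK n f.
Proof.
  unfold sum_on; rewrite <- sumK_plus; apply sumK_ext; intros k _; now destruct (P k); simpl; ring.
Qed.

Lemma sum_on_lin c d f g :
  sum_on n P (fun k => c * f k + d * g k) = c * sum_on n P f + d * sum_on n P g.
Proof.
  unfold sum_on; rewrite <- !sumK_scal, <- sumK_plus; apply sumK_ext; intros k _.
  destruct (P k); ring.
Qed.

Lemma sum_on_scal c f : sum_on n P (fun k => c * f k) = c * sum_on n P f.
Proof. unfold sum_on; rewrite <- sumK_scal; apply sumK_ext; intros k _; destruct (P k); ring. Qed.

Lemma sum_on_le f g : (forall k, (k < n)%nat -> P k = true -> f k <= g k) ->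
  sum_on n P f <= sum_on n P g.
Proof.
  intros H; apply sumK_le; intros k Hk; destruct (P k) eqn:Pk; [apply H | lra]; assumption.
Qed.

Lemma sum_on_term f k : (forall j, (j < n)%nat -> P j = true -> 0 <= f j) ->
  (k < n)%nat -> P k = true -> f k <= sum_on n P f.
Proof.
  intros Hf Hk Pk; unfold sum_on.
  replace n with (S k + (n - S k))%nat by lia; rewrite sumK_app; cbn [sumK]; rewrite Pk.
  enough (0 <= sumK k (fun j => if P j then f j else 0)
            + sumK (n - S k) (fun i => if P (S k + i)%nat then f (S k + i)%nat else 0)) by lra.
  apply Rplus_le_le_0_compat; apply sumK_nonneg; intros j Hj;
    [destruct (P j) eqn:Pj | destruct (P (S k + j)%nat) eqn:Pj]; try lra; apply Hf; auto; lia.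
Qed.

Lemma sum_on_pos f : (forall k, (k < n)%nat -> P k = true -> 0 < f k) ->
  (exists k, (k < n)%nat /\ P k = true) -> 0 < sum_on n P f.
Proof.
  intros Hf (k & Hk & Pk).
  apply (Rlt_le_trans _ (f k)); [apply Hf; assumption |].
  apply sum_on_term; [intros j Hj Pj; left; apply Hf | |]; assumption.
Qed.

Lemma sum_on_count : exists m, (m <= n)%nat /\ sum_on n P (fun _ => 1) = INR m.
Proof.
  unfold sum_on; induction n as [| n' IH]; [now exists 0%nat |].
  destruct IH as (m & Hm & E); cbn [sumK]; rewrite E.
  destruct (P n'); [exists (S m); rewrite S_INR | exists m]; split; try lia; ring.
Qed.

Lemma sum_on_pos_ex f : 0 < sum_on n P f -> exists k, (k < n)%nat /\ P k = true.
Proof.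
  unfold sum_on; induction n as [| n' IH]; cbn [sumK]; intros H; [lra |].
  destruct (P n') eqn:Pn; [exists n'; split; [lia | exact Pn] |].
  destruct IH as (k & Hk & Pk); [lra | exists k; split; [lia | exact Pk]].
Qed.

End SumOn.

(** * The entropy, its gradient and its Hessian form *)

Definition phi (a t : R) : R :=
  if Req_EM_T a 0 then - ln t
  else if Req_EM_T a 1 then t * ln t
  else - (Rpower t a / (a * (1 - a))).

Definition dphi (a t : R) : R :=
  if Req_EM_T a 0 then - / t
  else if Req_EM_T a 1 then ln t + 1
  else - (Rpower t (a - 1) / (1 - a)).

Lemma negS_sumK a K r : - S_alpha a K r = sumK K (fun k => phi a (r k)).
Proof.
  unfold S_alpha, phi; destruct (Req_EM_T a 0); [| destruct (Req_EM_T a 1)].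
  - transitivity (-1 * sumK K (fun k => ln (r k))); [ring |].
    rewrite <- sumK_scal; apply sumK_ext; intros; ring.
  - apply Ropp_involutive.
  - transitivity (- / (a * (1 - a)) * sumK K (fun k => Rpower (r k) a)); [unfold Rdiv; ring |].
    rewrite <- sumK_scal; apply sumK_ext; intros; unfold Rdiv; ring.
Qed.

Lemma is_derive_phi a t : 0 < t -> is_derive (phi a) t (dphi a t).
Proof.
  intros Ht; unfold phi, dphi.
  destruct (Req_EM_T a 0); [| destruct (Req_EM_T a 1)]; auto_derive;
    try (exact Ht || apply ex_derive_Rpower, Ht).
  - ring.
  - field; lra.
  - rewrite Derive_Rpower by exact Ht; field; split; lra.
Qed.

Lemma is_derive_dphi a t : 0 < t -> is_derive (dphi a) t (Rpower t (a - 2)).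
Proof.
  intros Ht; unfold dphi.
  destruct (Req_EM_T a 0) as [-> | Ha0]; [| destruct (Req_EM_T a 1) as [-> | Ha1]];
    auto_derive; try (lra || apply ex_derive_Rpower, Ht).
  - replace (0 - 2) with (- (1 + 1)) by ring.
    rewrite (Rpower_Ropp t), Rpower_plus, Rpower_1 by exact Ht; field; lra.
  - replace (1 - 2) with (- (1)) by ring.
    rewrite (Rpower_Ropp t), Rpower_1 by exact Ht; field; lra.
  - rewrite Derive_Rpower by exact Ht.
    replace (a - 1 - 1) with (a - 2) by ring; field; lra.
Qed.

Lemma partial_negS a K q k : (k < K)%nat -> 0 < q k ->
  partial (fun r => - S_alpha a K r) q k = dphi a (q k).
Proof.
  intros Hk Hq; unfold partial.
  rewrite (Derive_ext _ (fun t => sumK K (fun j => phi a (q j)) - phi a (q k) + phi a t)).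
  - apply is_derive_unique; rewrite <- (Rplus_0_l (dphi a (q k))).
    apply (is_derive_plus (fun _ => _) (phi a));
      [exact (is_derive_const _ _) | apply is_derive_phi, Hq].
  - intros t; rewrite negS_sumK, sumK_upd by exact Hk; ring.
Qed.

Lemma grad_dot_negS a K q x : (forall k, (k < K)%nat -> 0 < q k) ->
  grad_dot K (fun r => - S_alpha a K r) q x = sumK K (fun k => dphi a (q k) * x k).
Proof. intros Hq; apply sumK_ext; intros k Hk; rewrite partial_negS; auto. Qed.

Definition hessian_form (a : R) (K : nat) (r x : nat -> R) : R :=
  sumK K (fun k => Rpower (r k) (a - 2) * x k ^ 2).

Lemma hessian_form_nonneg a K r x : 0 <= hessian_form a K r x.
Proof.
  apply sumK_nonneg; intros k _; apply Rmult_le_pos; [left; apply Rpower_gt0 | apply pow2_ge_0].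
Qed.

Definition negS_seg (a : R) (K : nat) (q x : nat -> R) (t : R) : R :=
  - S_alpha a K (fun k => q k + t * x k).

Definition dnegS_seg (a : R) (K : nat) (q x : nat -> R) (t : R) : R :=
  sumK K (fun k => dphi a (q k + t * x k) * x k).

Section Segment.

Variables (a : R) (K : nat) (q x : nat -> R).

Lemma is_derive_negS_seg s : (forall k, (k < K)%nat -> 0 < q k + s * x k) ->
  is_derive (negS_seg a K q x) s (dnegS_seg a K q x s).
Proof.
  intros Hpos.
  apply (is_derive_ext (fun t => sumK K (fun k => phi a (q k + t * x k))));
    [intros t; symmetry; apply negS_sumK |].
  apply (is_derive_sumK K (fun k t => phi a (q k + t * x k))); intros k Hk.
  apply is_derive_comp_affine, is_derive_phi, Hpos, Hk.
Qed.

Lemma is_derive_dnegS_seg s : (forall k, (k < K)%nat -> 0 < q k + s * x k) ->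
  is_derive (dnegS_seg a K q x) s (hessian_form a K (fun k => q k + s * x k) x).
Proof.
  intros Hpos.
  apply (is_derive_sumK K (fun k t => dphi a (q k + t * x k) * x k)); intros k Hk.
  replace (Rpower (q k + s * x k) (a - 2) * x k ^ 2)
    with (Rpower (q k + s * x k) (a - 2) * x k * x k) by ring.
  apply (is_derive_scal_l (K := R_AbsRing) (V := R_NormedModule) (fun t => dphi a (q k + t * x k))).
  apply is_derive_comp_affine, is_derive_dphi, Hpos, Hk.
Qed.

Lemma negS_seg_0 : negS_seg a K q x 0 = - S_alpha a K q.
Proof. unfold negS_seg; rewrite !negS_sumK; apply sumK_ext; intros k _; f_equal; ring. Qed.

Lemma dnegS_seg_0 : (forall k, (k < K)%nat -> 0 < q k) ->
  dnegS_seg a K q x 0 = grad_dot K (fun r => - S_alpha a K r) q x.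
Proof.
  intros Hq; unfold dnegS_seg; rewrite grad_dot_negS by exact Hq.
  apply sumK_ext; intros k _; f_equal; f_equal; ring.
Qed.

End Segment.

Lemma negS_seg_1 a K q p : negS_seg a K q (fun k => p k - q k) 1 = - S_alpha a K p.
Proof. unfold negS_seg; rewrite !negS_sumK; apply sumK_ext; intros k _; f_equal; ring. Qed.

Lemma segment_in_relint K q p s : in_relint K q -> in_relint K p -> 0 <= s <= 1 ->
  in_relint K (fun k => q k + s * (p k - q k)).
Proof.
  intros [Hq Sq] [Hp Sp] Hs; split.
  - intros k Hk; specialize (Hq k Hk); specialize (Hp k Hk).
    pose proof (Rmin_glb_lt (q k) (p k) 0); pose proof (Rmax_lub_lt (q k) (p k) 1).
    pose proof (Rmin_l (q k) (p k)); pose proof (Rmin_r (q k) (p k)).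
    pose proof (Rmax_l (q k) (p k)); pose proof (Rmax_r (q k) (p k)).
    assert (0 <= (1 - s) * (q k - Rmin (q k) (p k)) + s * (p k - Rmin (q k) (p k)))
      by (apply Rplus_le_le_0_compat; apply Rmult_le_pos; lra).
    assert (0 <= (1 - s) * (Rmax (q k) (p k) - q k) + s * (Rmax (q k) (p k) - p k))
      by (apply Rplus_le_le_0_compat; apply Rmult_le_pos; lra).
    split; nra.
  - rewrite (sumK_ext _ _ (fun k => (1 - s) * q k + s * p k)) by (intros; ring).
    rewrite sumK_plus, !sumK_scal, Sq, Sp; ring.
Qed.

Lemma negS_seg_derivatives a K q p s (x := fun k => p k - q k) :
  in_relint K q -> in_relint K p -> 0 <= s <= 1 ->
  is_derive (negS_seg a K q x) s (dnegS_seg a K q x s) /\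
  is_derive (dnegS_seg a K q x) s (hessian_form a K (fun k => q k + s * x k) x).
Proof.
  intros Hq Hp Hs.
  assert (Hpos : forall k, (k < K)%nat -> 0 < q k + s * x k)
    by (intros k Hk; apply (segment_in_relint K q p s Hq Hp Hs), Hk).
  split; [apply is_derive_negS_seg | apply is_derive_dnegS_seg]; exact Hpos.
Qed.

Lemma norm1_nonneg K x : 0 <= norm1 K x.
Proof. apply sumK_nonneg; intros; apply Rabs_pos. Qed.

Definition hessian_lower_bound (a : R) (K : nat) (C : R) : Prop :=
  forall r x : nat -> R, in_relint K r -> sumK K x = 0 ->
    C * norm1 K x ^ 2 <= hessian_form a K r x.

Lemma negS_strongly_convex_of_hessian a K C :
  hessian_lower_bound a K C -> negS_strongly_convex a K C.
Proof.
  intros HQ p q Hp Hq; set (x := fun k => p k - q k).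
  assert (Sx : sumK K x = 0).
  { unfold x; rewrite (sumK_ext _ _ (fun k => p k + (-1) * q k)) by (intros; ring).
    rewrite sumK_plus, sumK_scal, (proj2 Hp), (proj2 Hq); ring. }
  rewrite <- (negS_seg_0 a K q x), <- (negS_seg_1 a K q p), <- (dnegS_seg_0 a K q x)
    by (intros k Hk; apply Hq, Hk).
  apply Rle_ge; replace (C / 2 * norm1 K x ^ 2) with (C * norm1 K x ^ 2 / 2) by field.
  apply (taylor2_lower _ _ (fun s => hessian_form a K (fun k => q k + s * x k) x)).
  intros s Hs; destruct (negS_seg_derivatives a K q p s Hq Hp Hs) as [Hg Hdg].
  split; [exact Hg | split; [exact Hdg |]].
  apply HQ; [apply segment_in_relint; assumption | exact Sx].
Qed.

Lemma le_hessian_of_negS_strongly_convex a K C q p L :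
  negS_strongly_convex a K C -> in_relint K q -> in_relint K p ->
  (forall s, 0 <= s <= 1 ->
     hessian_form a K (fun k => q k + s * (p k - q k)) (fun k => p k - q k) <= L) ->
  C * norm1 K (fun k => p k - q k) ^ 2 <= L.
Proof.
  intros HC Hq Hp HL; pose proof (HC p q Hp Hq) as Hpq; set (x := fun k => p k - q k) in *.
  rewrite <- (negS_seg_0 a K q x), <- (negS_seg_1 a K q p), <- (dnegS_seg_0 a K q x) in Hpq
    by (intros k Hk; apply Hq, Hk).
  fold x in Hpq.
  enough (negS_seg a K q x 1 <= negS_seg a K q x 0 + dnegS_seg a K q x 0 + L / 2) by lra.
  apply (taylor2_upper _ _ (fun s => hessian_form a K (fun k => q k + s * x k) x)).
  intros s Hs; destruct (negS_seg_derivatives a K q p s Hq Hp Hs) as [Hg Hdg].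
  split; [exact Hg | split; [exact Hdg | apply HL, Hs]].
Qed.

Lemma norm1_scal K t x : norm1 K (fun k => t * x k) = Rabs t * norm1 K x.
Proof. unfold norm1; rewrite <- sumK_scal; apply sumK_ext; intros; apply Rabs_mult. Qed.

Lemma Rabs_le_norm1 K x k : (k < K)%nat -> Rabs (x k) <= norm1 K x.
Proof.
  intros Hk; change (norm1 K x) with (sum_on K (fun _ => true) (fun k => Rabs (x k))).
  apply (sum_on_term K (fun _ => true) (fun k => Rabs (x k)) k);
    [intros; apply Rabs_pos | exact Hk | reflexivity].
Qed.

Lemma hessian_form_ext a K r r' x x' : (forall k, (k < K)%nat -> r k = r' k /\ x k = x' k) ->
  hessian_form a K r x = hessian_form a K r' x'.
Proof. intros H; apply sumK_ext; intros k Hk; destruct (H k Hk) as [-> ->]; reflexivity. Qed.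

Lemma hessian_form_scal a K r t x :
  hessian_form a K r (fun k => t * x k) = t ^ 2 * hessian_form a K r x.
Proof. unfold hessian_form; rewrite <- sumK_scal; apply sumK_ext; intros; ring. Qed.

Lemma continuity_pt_hessian_form a K q d : (forall k, (k < K)%nat -> 0 < q k) ->
  continuity_pt (fun s => hessian_form a K (fun k => q k + s * d k) d) 0.
Proof.
  intros Hq; apply continuity_pt_of_ex_derive.
  exists (sumK K (fun k => (a - 2) * Rpower (q k + 0 * d k) (a - 2 - 1) * d k * d k ^ 2)).
  apply (is_derive_sumK K (fun k s => Rpower (q k + s * d k) (a - 2) * d k ^ 2)); intros k Hk.
  apply (is_derive_scal_l (K := R_AbsRing) (V := R_NormedModule)
           (fun s => Rpower (q k + s * d k) (a - 2))).
  apply (is_derive_comp_affine (fun y => Rpower y (a - 2))), is_derive_Rpower.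
  rewrite Rmult_0_l, Rplus_0_r; apply Hq, Hk.
Qed.

Lemma relint_margin K q : in_relint K q ->
  exists del, 0 < del /\ forall k, (k < K)%nat -> del <= q k <= 1 - del.
Proof.
  intros Hq; destruct (exists_lower_bound K (fun k => Rmin (q k) (1 - q k))) as (del & Hdel & Hdq).
  - intros k Hk; destruct (proj1 Hq k Hk); apply Rmin_pos; lra.
  - exists del; split; [exact Hdel |]; intros k Hk; specialize (Hdq k Hk).
    pose proof (Rmin_l (q k) (1 - q k)); pose proof (Rmin_r (q k) (1 - q k)); lra.
Qed.

Lemma in_relint_perturb K q d del t : (forall k, (k < K)%nat -> del <= q k <= 1 - del) ->
  sumK K q = 1 -> sumK K d = 0 -> 0 <= t -> t * norm1 K d < del ->
  in_relint K (fun k => q k + t * d k).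
Proof.
  intros Hdq Sq Sd Ht Htd; split.
  - intros k Hk; specialize (Hdq k Hk).
    assert (Hdk : Rabs (t * d k) <= t * norm1 K d).
    { rewrite Rabs_mult, Rabs_right by lra.
      apply Rmult_le_compat_l; [lra | apply Rabs_le_norm1, Hk]. }
    apply Rabs_le_between in Hdk; lra.
  - rewrite sumK_plus, sumK_scal, Sd, Sq; ring.
Qed.

Lemma hessian_lower_bound_of_negS_strongly_convex a K C :
  negS_strongly_convex a K C -> hessian_lower_bound a K C.
Proof.
  intros HC q d Hq Sd.
  destruct (relint_margin K q Hq) as (del & Hdel & Hdq).
  pose proof (norm1_nonneg K d) as HN.
  rewrite (hessian_form_ext a K q (fun k => q k + 0 * d k) d d) by (intros; split; ring).
  apply (le_of_local_sup _ (fun s => hessian_form a K (fun k => q k + s * d k) d)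
           (del / (norm1 K d + 1))); [apply Rdiv_lt_0_compat; lra | |].
  { apply continuity_pt_hessian_form; intros k Hk; apply Hq, Hk. }
  intros t L Ht HL; set (p := fun k => q k + t * d k).
  assert (Hp : in_relint K p).
  { apply (in_relint_perturb K q d del t Hdq (proj2 Hq) Sd); [lra |].
    destruct Ht as [Ht0 Ht1]; apply (Rmult_lt_compat_r (norm1 K d + 1)) in Ht1; [| lra].
    unfold Rdiv in Ht1; rewrite Rmult_assoc, Rinv_l, Rmult_1_r in Ht1 by lra; nra. }
  pose proof (le_hessian_of_negS_strongly_convex a K C q p (t ^ 2 * L) HC Hq Hp) as H.
  replace (norm1 K (fun k => p k - q k)) with (norm1 K (fun k => t * d k)) in H
    by (apply sumK_ext; intros; unfold p; f_equal; ring).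
  rewrite norm1_scal, Rabs_right in H by lra.
  apply (Rmult_le_reg_l (t ^ 2)); [apply pow_lt; lra |].
  replace (t ^ 2 * (C * norm1 K d ^ 2)) with (C * (t * norm1 K d) ^ 2) by ring.
  apply H; intros s Hs.
  rewrite (hessian_form_ext a K _ (fun k => q k + (s * t) * d k) _ (fun k => t * d k))
    by (intros k _; unfold p; split; ring).
  rewrite hessian_form_scal; apply Rmult_le_compat_l; [apply pow2_ge_0 | apply HL; nra].
Qed.

Lemma C_const_le1 a K : a <= 1 -> C_const a K = Rpower 2 (1 - a).
Proof. intros Ha; unfold C_const; destruct (Rle_dec a 1); [reflexivity | lra]. Qed.

Lemma C_const_two a : 2 < a -> C_const a 2 = Rpower 2 (1 - Rmax a 3).
Proof.
  intros Ha; unfold C_const; destruct (Rle_dec a 1); [lra |].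
  destruct (Rle_dec a 2); [lra | reflexivity].
Qed.

Lemma C_const_ge3 a K : 2 < a -> (3 <= K)%nat -> C_const a K = 0.
Proof.
  intros Ha HK; unfold C_const; destruct (Rle_dec a 1); [lra |]; destruct (Rle_dec a 2); [lra |].
  destruct (Nat.eqb_spec K 2); [lia | reflexivity].
Qed.


Section MiddleRange.

Variable a : R.
Hypothesis Ha : 1 < a <= 2.
Let e := (1 - a) / (3 - a).

Lemma C_const_mid_even j : (1 <= j)%nat ->
  4 * Rpower (INR (2 * j)) (1 - a) = Rpower (Rpower (INR j) e + Rpower (INR j) e) (3 - a).
Proof.
  intros Hj; assert (J : 0 < INR j) by (apply lt_0_INR; lia).
  pose proof (Rpower_gt0 (INR j) e).
  rewrite mult_INR; replace (INR 2) with 2 by (simpl; ring).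
  replace (Rpower (INR j) e + Rpower (INR j) e) with (2 * Rpower (INR j) e) by ring.
  rewrite <- !Rpower_mult_distr, Rpower_mult by lra.
  replace (e * (3 - a)) with (1 - a) by (unfold e; field; lra).
  replace (3 - a) with (2 + (1 - a)) by ring; rewrite Rpower_plus, Rpower_2_2; ring.
Qed.

Lemma C_const_mid_odd j : (1 <= j)%nat ->
  let K := INR (2 * j + 1) in
  4 * (Rpower K (1 - a) * Rpower ((Rpower (1 - 1 / K) e + Rpower (1 + 1 / K) e) / 2) (3 - a))
  = Rpower (Rpower (INR j) e + Rpower (INR j + 1) e) (3 - a).
Proof.
  intros Hj K; assert (J : 0 < INR j) by (apply lt_0_INR; lia).
  assert (EK : K = 2 * INR j + 1) by (unfold K; rewrite plus_INR, mult_INR; simpl; ring).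
  replace (1 - 1 / K) with (2 / K * INR j) by (rewrite EK; field; lra).
  replace (1 + 1 / K) with (2 / K * (INR j + 1)) by (rewrite EK; field; lra).
  assert (H2K : 0 < 2 / K) by (apply Rdiv_lt_0_compat; lra).
  set (S := Rpower (INR j) e + Rpower (INR j + 1) e).
  assert (HS : 0 < S)
    by (unfold S; pose proof (Rpower_gt0 (INR j) e); pose proof (Rpower_gt0 (INR j + 1) e); lra).
  rewrite <- !Rpower_mult_distr by lra.
  replace ((Rpower (2 / K) e * Rpower (INR j) e + Rpower (2 / K) e * Rpower (INR j + 1) e) / 2)
    with (Rpower (2 / K) e * (S / 2)) by (unfold S; field).
  pose proof (Rpower_gt0 (2 / K) e).
  apply ln_inv.
  - apply Rmult_lt_0_compat; [lra | apply Rmult_lt_0_compat; apply Rpower_gt0].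
  - apply Rpower_gt0.
  - rewrite !ln_mult, !ln_Rpower, ln_mult, ln_Rpower, !ln_div by
      (try apply Rmult_lt_0_compat; try apply Rpower_gt0; lra).
    replace 4 with (2 * 2) by ring; rewrite ln_mult by lra.
    unfold e; field; lra.
Qed.

Lemma C_const_mid K : (2 <= K)%nat ->
  4 * C_const a K = Rpower (Rpower (INR (K / 2)) e + Rpower (INR K - INR (K / 2)) e) (3 - a).
Proof.
  intros HK; unfold C_const; destruct (Rle_dec a 1); [lra |]; destruct (Rle_dec a 2); [| lra].
  destruct (Nat.Even_or_Odd K) as [[j ->] | [j ->]].
  - rewrite Nat.even_mul; simpl Nat.even; cbv iota.
    replace (2 * j / 2)%nat with j by (rewrite Nat.mul_comm, Nat.div_mul; lia).
    replace (INR (2 * j) - INR j) with (INR j) by (rewrite mult_INR; simpl; ring).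
    apply C_const_mid_even; lia.
  - replace (Nat.even (2 * j + 1)) with false
      by (rewrite Nat.even_add, Nat.even_mul; reflexivity).
    replace ((2 * j + 1) / 2)%nat with j by (apply (Nat.div_unique _ _ _ 1); lia).
    replace (INR (2 * j + 1) - INR j) with (INR j + 1) by (rewrite plus_INR, mult_INR; simpl; ring).
    apply C_const_mid_odd; lia.
Qed.

End MiddleRange.

(** * Lower bound on the Hessian form *)

Lemma sq_div_le_sum_on n P (r y : nat -> R) a A :
  (forall k, (k < n)%nat -> P k = true -> 0 < r k) -> 0 < A ->
  sum_on n P (fun k => Rpower (r k) (2 - a)) <= A ->
  (sum_on n P y) ^ 2 / A <= sum_on n P (fun k => Rpower (r k) (a - 2) * y k ^ 2).
Proof.
  intros Hr HA HsA; set (c := sum_on n P y / A).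
  (* Cauchy-Schwarz: sum [2 c y - c^2 R <= y^2 / R] over [P], with [R = r^(2-a)]. *)
  assert (Hpt : forall k, (k < n)%nat -> P k = true ->
            2 * c * y k + (- c ^ 2) * Rpower (r k) (2 - a) <= Rpower (r k) (a - 2) * y k ^ 2).
  { intros k Hk Pk; set (R := Rpower (r k) (2 - a)).
    assert (HR : 0 < R) by apply Rpower_gt0.
    replace (Rpower (r k) (a - 2)) with (/ R)
      by (unfold R; rewrite <- Rpower_Ropp; f_equal; ring).
    assert (0 <= (y k - c * R) ^ 2 / R) by (apply Rdiv_le_0_compat; [apply pow2_ge_0 | lra]).
    enough ((y k - c * R) ^ 2 / R = / R * y k ^ 2 - (2 * c * y k + - c ^ 2 * R)) by lra.
    field; lra. }
  apply sum_on_le in Hpt; rewrite sum_on_lin in Hpt.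
  assert (c ^ 2 * sum_on n P (fun k => Rpower (r k) (2 - a)) <= c ^ 2 * A)
    by (apply Rmult_le_compat_l; [apply pow2_ge_0 | exact HsA]).
  replace ((sum_on n P y) ^ 2 / A) with (2 * c * sum_on n P y - c ^ 2 * A)
    by (unfold c; field; lra).
  lra.
Qed.

Definition nonnegb (x : nat -> R) (k : nat) : bool := if Rle_dec 0 (x k) then true else false.

Section SignSplit.

Variables (K : nat) (x : nat -> R).
Let P := nonnegb x.
Let N := fun k => negb (nonnegb x k).

Lemma sum_on_sign_norm1 : sum_on K P x + sum_on K N (fun k => - x k) = norm1 K x.
Proof.
  unfold sum_on, norm1, P, N, nonnegb; rewrite <- sumK_plus; apply sumK_ext; intros k _.
  destruct (Rle_dec 0 (x k)); simpl; [rewrite Rabs_right | rewrite Rabs_left]; lra.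
Qed.

Lemma sum_on_sign_sum : sum_on K P x - sum_on K N (fun k => - x k) = sumK K x.
Proof.
  rewrite <- (sum_on_compl K P x).
  replace (sum_on K N (fun k => - x k)) with (sum_on K N (fun k => (-1) * x k + 0 * x k))
    by (apply sumK_ext; intros k _; destruct (N k); ring).
  rewrite sum_on_lin; unfold N, P; ring.
Qed.

Lemma hessian_form_sign_split a r :
  hessian_form a K r x = sum_on K P (fun k => Rpower (r k) (a - 2) * x k ^ 2)
                         + sum_on K N (fun k => Rpower (r k) (a - 2) * (- x k) ^ 2).
Proof.
  unfold hessian_form; rewrite <- (sum_on_compl K P); f_equal.
  apply sumK_ext; intros k _; unfold N, P; destruct (negb (nonnegb x k)); ring.
Qed.

Lemma hessian_form_ge_sign_split a r A B :
  (forall k, (k < K)%nat -> 0 < r k) -> sumK K x = 0 -> 0 < A -> 0 < B ->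
  sum_on K P (fun k => Rpower (r k) (2 - a)) <= A ->
  sum_on K N (fun k => Rpower (r k) (2 - a)) <= B ->
  norm1 K x ^ 2 / 4 * (/ A + / B) <= hessian_form a K r x.
Proof.
  intros Hr Sx HA HB HPA HNB.
  pose proof sum_on_sign_norm1 as En; pose proof sum_on_sign_sum as Es.
  assert (Hhalf : sum_on K P x = norm1 K x / 2 /\ sum_on K N (fun k => - x k) = norm1 K x / 2)
    by lra.
  rewrite hessian_form_sign_split.
  pose proof (sq_div_le_sum_on K P r x a A (fun k Hk _ => Hr k Hk) HA HPA) as HP.
  pose proof (sq_div_le_sum_on K N r (fun k => - x k) a B (fun k Hk _ => Hr k Hk) HB HNB) as HN.
  destruct Hhalf as [-> ->] in HP, HN.
  replace (norm1 K x ^ 2 / 4 * (/ A + / B)) with ((norm1 K x / 2) ^ 2 / A + (norm1 K x / 2) ^ 2 / B)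
    by (field; lra).
  lra.
Qed.

End SignSplit.

Lemma split_sums_pos K P f : (forall k, (k < K)%nat -> 0 < f k) ->
  (exists k, (k < K)%nat /\ P k = true) -> (exists k, (k < K)%nat /\ P k = false) ->
  0 < sum_on K P f /\ 0 < sum_on K (fun k => negb (P k)) f.
Proof.
  intros Hf HP (j & Hj & Pj); split; apply sum_on_pos; try (intros k Hk _; apply Hf, Hk).
  - exact HP.
  - exists j; rewrite Pj; auto.
Qed.

Definition split_bound (a : R) (K : nat) (C : R) : Prop :=
  forall (r : nat -> R) (P : nat -> bool), in_relint K r ->
    (exists k, (k < K)%nat /\ P k = true) -> (exists k, (k < K)%nat /\ P k = false) ->
    4 * C <= / sum_on K P (fun k => Rpower (r k) (2 - a))
             + / sum_on K (fun k => negb (P k)) (fun k => Rpower (r k) (2 - a)).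

Lemma hessian_lower_bound_of_split_bound a K C : split_bound a K C -> hessian_lower_bound a K C.
Proof.
  intros HS r x Hr Sx.
  destruct (Rle_lt_or_eq_dec 0 (norm1 K x) (norm1_nonneg K x)) as [Hn | <-].
  2: { rewrite pow_i, Rmult_0_r by lia; apply hessian_form_nonneg. }
  pose proof (sum_on_sign_norm1 K x); pose proof (sum_on_sign_sum K x).
  set (P := nonnegb x) in *; set (f := fun k => Rpower (r k) (2 - a)).
  assert (HexP : exists k, (k < K)%nat /\ P k = true)
    by (apply (sum_on_pos_ex K P x); lra).
  assert (HexN : exists k, (k < K)%nat /\ P k = false).
  { destruct (sum_on_pos_ex K (fun k => negb (P k)) (fun k => - x k)) as (j & Hj & Nj); [lra |].
    exists j; split; [exact Hj | apply Bool.negb_true_iff, Nj]. }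
  destruct (split_sums_pos K P f (fun k _ => Rpower_gt0 _ _) HexP HexN) as [HA HB].
  eapply Rle_trans; [| apply (hessian_form_ge_sign_split K x a r (sum_on K P f)
                                (sum_on K (fun k => negb (P k)) f)); auto using Rle_refl].
  - replace (C * norm1 K x ^ 2) with (norm1 K x ^ 2 / 4 * (4 * C)) by field.
    apply Rmult_le_compat_l; [apply Rmult_le_pos; [apply pow2_ge_0 | lra] |].
    apply (HS r P Hr HexP HexN).
  - intros k Hk; apply Hr, Hk.
Qed.

Lemma sum_on_Rpower_le_Rpower n P r b : 1 <= b ->
  (forall k, (k < n)%nat -> P k = true -> 0 < r k) -> 0 < sum_on n P r ->
  sum_on n P (fun k => Rpower (r k) b) <= Rpower (sum_on n P r) b.
Proof.
  intros Hb Hr HA; set (A := sum_on n P r) in *.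
  replace (Rpower A b) with (Rpower A (b - 1) * A)
    by (rewrite <- (Rpower_1 A) at 2 by exact HA; rewrite <- Rpower_plus; f_equal; ring).
  unfold A at 2; rewrite <- sum_on_scal; apply sum_on_le; intros k Hk Pk.
  assert (Hrk : r k <= A) by (apply sum_on_term; auto; intros j Hj Pj; left; apply Hr; auto).
  replace (Rpower (r k) b) with (Rpower (r k) (b - 1) * r k)
    by (rewrite <- (Rpower_1 (r k)) at 2 by auto; rewrite <- Rpower_plus; f_equal; ring).
  apply Rmult_le_compat_r; [left; apply Hr; auto | apply Rle_Rpower_l; [lra | split; auto]].
Qed.

Lemma sum_on_Rpower_le_count n P r b m : 0 <= b <= 1 ->
  (forall k, (k < n)%nat -> P k = true -> 0 < r k) -> 0 < sum_on n P r ->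
  sum_on n P (fun _ => 1) = m -> 0 < m ->
  sum_on n P (fun k => Rpower (r k) b) <= m * Rpower (sum_on n P r / m) b.
Proof.
  intros Hb Hr HA Hm Hm0; set (c := sum_on n P r / m).
  assert (Hc : 0 < c) by (apply Rdiv_lt_0_compat; assumption).
  apply (Rle_trans _ (sum_on n P (fun k => (Rpower c b - b * Rpower c (b - 1) * c) * 1
                                           + (b * Rpower c (b - 1)) * r k))).
  - apply sum_on_le; intros k Hk Pk.
    pose proof (Rpower_le_tangent b c (r k) Hb Hc (Hr k Hk Pk)); lra.
  - rewrite sum_on_lin, Hm; replace (sum_on n P r) with (c * m) by (unfold c; field; lra).
    right; ring.
Qed.

Lemma Rinv_mul_Rpower_div m c b : 0 < m -> 0 < c -> 0 < 1 + b ->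
  / (m * Rpower (c / m) b) = c * Rpower (Rpower m ((b - 1) / (1 + b)) / c) (1 + b).
Proof.
  intros Hm Hc Hb.
  assert (0 < c / m) by (apply Rdiv_lt_0_compat; assumption).
  assert (0 < Rpower m ((b - 1) / (1 + b)) / c)
    by (apply Rdiv_lt_0_compat; [apply Rpower_gt0 | exact Hc]).
  apply ln_inv.
  - apply Rinv_0_lt_compat, Rmult_lt_0_compat; [exact Hm | apply Rpower_gt0].
  - apply Rmult_lt_0_compat; [exact Hc | apply Rpower_gt0].
  - rewrite ln_Rinv, !ln_mult, !ln_Rpower, !ln_div, ln_Rpower
      by (try apply Rmult_lt_0_compat; try apply Rpower_gt0; assumption).
    field; lra.
Qed.

Lemma inv_add_inv_ge_blocks b m n c d A B :
  0 <= b -> 0 < m -> 0 < n -> 0 < c -> 0 < d -> c + d = 1 ->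
  0 < A -> A <= m * Rpower (c / m) b -> 0 < B -> B <= n * Rpower (d / n) b ->
  Rpower (Rpower m ((b - 1) / (1 + b)) + Rpower n ((b - 1) / (1 + b))) (1 + b) <= / A + / B.
Proof.
  intros Hb Hm Hn Hc Hd Hcd HA HAm HB HBn.
  apply (Rle_trans _ (/ (m * Rpower (c / m) b) + / (n * Rpower (d / n) b))).
  - rewrite !Rinv_mul_Rpower_div by lra.
    apply Rpower_jensen2; try apply Rpower_gt0; lra.
  - apply Rplus_le_compat; apply Rinv_le_contravar; assumption.
Qed.

Lemma Rpower_add_compl_antitone e S y z : e <= 0 -> 0 < y <= z -> 2 * z <= S ->
  Rpower z e + Rpower (S - z) e <= Rpower y e + Rpower (S - y) e.
Proof.
  intros He Hyz HzS; apply Ropp_le_cancel.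
  apply (le_of_derive_nonneg (fun t => - (Rpower t e + Rpower (S - t) e))
           (fun t => e * (Rpower (S - t) (e - 1) - Rpower t (e - 1)))); [lra | |].
  - intros t Ht; auto_derive; [repeat split; apply ex_derive_Rpower; lra |].
    rewrite !Derive_Rpower by lra; replace (S + - t) with (S - t) by ring; ring.
  - intros t Ht.
    assert (Rpower (S - t) (e - 1) <= Rpower t (e - 1)) by (apply Rpower_le_antitone; lra).
    nra.
Qed.

Lemma Rpower_add_compl_ge_half e K m : e <= 0 -> (1 <= m)%nat -> (m < K)%nat ->
  Rpower (INR (K / 2)) e + Rpower (INR K - INR (K / 2)) e
  <= Rpower (INR m) e + Rpower (INR K - INR m) e.
Proof.
  intros He Hm HmK.
  pose proof (Nat.div_mod K 2 ltac:(lia)); pose proof (Nat.mod_upper_bound K 2 ltac:(lia)).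
  assert (Hh : 2 * INR (K / 2) <= INR K).
  { replace (2 * INR (K / 2)) with (INR (2 * (K / 2))) by (rewrite mult_INR; simpl; ring).
    apply le_INR; lia. }
  destruct (Nat.le_gt_cases (2 * m) K) as [H2m | H2m].
  - apply Rpower_add_compl_antitone; [exact He | split | exact Hh].
    + apply lt_0_INR; lia.
    + apply le_INR, Nat.div_le_lower_bound; lia.
  - replace (Rpower (INR m) e) with (Rpower (INR K - INR (K - m)) e)
      by (rewrite minus_INR by lia; f_equal; ring).
    replace (INR K - INR m) with (INR (K - m)) by (rewrite minus_INR by lia; ring).
    rewrite (Rplus_comm (Rpower (INR K - INR (K - m)) e)).
    apply Rpower_add_compl_antitone; [exact He | split | exact Hh].
    + apply lt_0_INR; lia.
    + apply le_INR, Nat.div_le_lower_bound; lia.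
Qed.

Lemma split_bound_le1 a K : a <= 1 -> split_bound a K (C_const a K).
Proof.
  intros Ha r P Hr HP HN.
  assert (Hr0 : forall k, (k < K)%nat -> 0 < r k) by (intros k Hk; apply Hr, Hk).
  destruct (split_sums_pos K P r Hr0 HP HN) as [Hc Hd].
  destruct (split_sums_pos K P (fun k => Rpower (r k) (2 - a)) (fun k _ => Rpower_gt0 _ _) HP HN)
    as [HA HB].
  pose proof (sum_on_compl K P r) as Hcd; rewrite (proj2 Hr) in Hcd.
  set (e := (2 - a - 1) / (1 + (2 - a))).
  replace (4 * C_const a K) with (Rpower (Rpower 1 e + Rpower 1 e) (1 + (2 - a))).
  2: { rewrite C_const_le1, Rpower_1_l by exact Ha.
       replace (1 + (2 - a)) with (2 + (1 - a)) by ring.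
       rewrite Rpower_plus, <- Rpower_2_2; f_equal; ring. }
  apply (inv_add_inv_ge_blocks (2 - a) 1 1 (sum_on K P r) (sum_on K (fun k => negb (P k)) r));
    try lra; rewrite Rmult_1_l, Rdiv_1_r;
    (apply sum_on_Rpower_le_Rpower; [lra | intros k Hk _; apply Hr0, Hk | assumption]).
Qed.

Lemma split_bound_mid a K : 1 < a <= 2 -> (2 <= K)%nat -> split_bound a K (C_const a K).
Proof.
  intros Ha HK r P Hr HP HN.
  assert (Hr0 : forall k, (k < K)%nat -> 0 < r k) by (intros k Hk; apply Hr, Hk).
  destruct (split_sums_pos K P r Hr0 HP HN) as [Hc Hd].
  destruct (split_sums_pos K P (fun k => Rpower (r k) (2 - a)) (fun k _ => Rpower_gt0 _ _) HP HN)
    as [HA HB].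
  destruct (split_sums_pos K P (fun _ => 1) (fun _ _ => Rlt_0_1) HP HN) as [Hm0 Hn0].
  pose proof (sum_on_compl K P r) as Hcd; rewrite (proj2 Hr) in Hcd.
  destruct (sum_on_count K P) as (m & HmK & Hm).
  assert (Hn : sum_on K (fun k => negb (P k)) (fun _ => 1) = INR K - INR m).
  { pose proof (sum_on_compl K P (fun _ => 1)) as E; rewrite sumK_const in E; lra. }
  assert (Hm1 : (1 <= m < K)%nat) by (split; [apply INR_lt | apply INR_lt]; simpl; lra).
  set (e := (1 - a) / (3 - a)).
  assert (He : e <= 0) by (unfold e, Rdiv; pose proof (Rinv_0_lt_compat (3 - a)); nra).
  rewrite (C_const_mid a Ha K HK); fold e.
  apply (Rle_trans _ (Rpower (Rpower (INR m) e + Rpower (INR K - INR m) e) (3 - a))).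
  - apply Rle_Rpower_l; [lra | split].
    + pose proof (Rpower_gt0 (INR (K / 2)) e); pose proof (Rpower_gt0 (INR K - INR (K / 2)) e); lra.
    + apply Rpower_add_compl_ge_half; [exact He | lia | lia].
  - replace e with ((2 - a - 1) / (1 + (2 - a))) by (unfold e; field; lra).
    replace (3 - a) with (1 + (2 - a)) by ring.
    apply (inv_add_inv_ge_blocks (2 - a) (INR m) (INR K - INR m) (sum_on K P r)
             (sum_on K (fun k => negb (P k)) r)); try lra;
      (apply sum_on_Rpower_le_count;
         [lra | intros k Hk _; apply Hr0, Hk | assumption | assumption | lra]).
Qed.

Lemma hessian_lower_bound_two a C :
  (forall t, 0 < t < 1 -> 4 * C <= Rpower t (a - 2) + Rpower (1 - t) (a - 2)) ->
  hessian_lower_bound a 2 C.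
Proof.
  intros H r x [Hr Sr] Sx; unfold norm1, hessian_form in *; cbn [sumK] in *.
  replace (r 1%nat) with (1 - r 0%nat) by lra; replace (x 1%nat) with (- x 0%nat) by lra.
  rewrite Rabs_Ropp.
  replace ((0 + Rabs (x 0%nat) + Rabs (x 0%nat)) ^ 2) with (4 * x 0%nat ^ 2)
    by (rewrite <- (pow2_abs (x 0%nat)); ring).
  replace (0 + Rpower (r 0%nat) (a - 2) * x 0%nat ^ 2
             + Rpower (1 - r 0%nat) (a - 2) * (- x 0%nat) ^ 2)
    with (x 0%nat ^ 2 * (Rpower (r 0%nat) (a - 2) + Rpower (1 - r 0%nat) (a - 2))) by ring.
  replace (C * (4 * x 0%nat ^ 2)) with (x 0%nat ^ 2 * (4 * C)) by ring.
  apply Rmult_le_compat_l; [apply pow2_ge_0 | apply H, Hr; lia].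
Qed.

Lemma Rpower_half_eq a : 2 * Rpower (/ 2) (a - 2) = 4 * Rpower 2 (1 - a).
Proof.
  replace (Rpower (/ 2) (a - 2)) with (Rpower 2 (2 - a))
    by (unfold Rpower; rewrite ln_Rinv by lra; f_equal; ring).
  rewrite <- Rpower_2_2, <- (Rpower_1 2) at 1 by lra; rewrite <- !Rpower_plus; f_equal; ring.
Qed.

Lemma four_C_const_two_le a t : 2 < a -> 0 < t < 1 ->
  4 * C_const a 2 <= Rpower t (a - 2) + Rpower (1 - t) (a - 2).
Proof.
  intros Ha Ht; rewrite C_const_two by exact Ha.
  destruct (Rle_dec a 3) as [Ha3 | Ha3].
  - rewrite Rmax_right by lra.
    assert (Hid : forall s, 0 < s < 1 -> s <= Rpower s (a - 2)).
    { intros s Hs; replace (Rpower s (a - 2)) with (s * Rpower s (a - 3))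
        by (rewrite <- (Rpower_1 s) at 1 by lra; rewrite <- Rpower_plus; f_equal; ring).
      assert (1 <= Rpower s (a - 3))
        by (rewrite <- (Rpower_1_l (a - 3)); apply Rpower_le_antitone; lra).
      nra. }
    pose proof (Hid t Ht); pose proof (Hid (1 - t) ltac:(lra)).
    replace (1 - 3) with (- (1 + 1)) by ring.
    rewrite Rpower_Ropp, Rpower_plus, Rpower_1 by lra; field_simplify; lra.
  - rewrite Rmax_left, <- Rpower_half_eq by lra.
    pose proof (Rpower_tangent_le (a - 2) (/ 2) t ltac:(lra) ltac:(lra) ltac:(lra)).
    pose proof (Rpower_tangent_le (a - 2) (/ 2) (1 - t) ltac:(lra) ltac:(lra) ltac:(lra)).
    nra.
Qed.

Lemma hessian_lower_bound_C_const a K : (2 <= K)%nat -> hessian_lower_bound a K (C_const a K).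
Proof.
  intros HK.
  destruct (Rle_dec a 1) as [Ha1 | Ha1];
    [apply hessian_lower_bound_of_split_bound, split_bound_le1, Ha1 |].
  destruct (Rle_dec a 2) as [Ha2 | Ha2];
    [apply hessian_lower_bound_of_split_bound, split_bound_mid; [lra | exact HK] |].
  destruct (Nat.eq_dec K 2) as [-> | HK2].
  - apply hessian_lower_bound_two; intros t Ht; apply four_C_const_two_le; lra.
  - intros r x _ _; rewrite C_const_ge3, Rmult_0_l by (lra || lia); apply hessian_form_nonneg.
Qed.

(** * Optimality *)

Definition two_point (u0 u1 w : R) (k : nat) : R :=
  match k with 0%nat => u0 | 1%nat => u1 | _ => w end.

Lemma sumK_first_two K f w : (2 <= K)%nat -> (forall k, (2 <= k)%nat -> f k = w) ->
  sumK K f = f 0%nat + f 1%nat + (INR K - 2) * w.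
Proof.
  intros HK Hw; replace K with (2 + (K - 2))%nat at 1 by lia.
  rewrite sumK_app, (sumK_ext (K - 2) _ (fun _ => w)) by (intros; apply Hw; lia).
  rewrite sumK_const, minus_INR by exact HK; cbn [sumK INR]; ring.
Qed.

Lemma in_relint_two_point K u0 u1 w : (2 <= K)%nat -> 0 < u0 < 1 -> 0 < u1 < 1 ->
  ((2 < K)%nat -> 0 < w < 1) -> u0 + u1 + (INR K - 2) * w = 1 -> in_relint K (two_point u0 u1 w).
Proof.
  intros HK H0 H1 Hw Hsum; split.
  - intros [| [| k]] Hk; [exact H0 | exact H1 | apply Hw; lia].
  - rewrite (sumK_first_two K _ w); [exact Hsum | exact HK |].
    intros [| [| k]] Hk; [lia | lia | reflexivity].
Qed.

Lemma four_C_le_two_point a K C u0 u1 w : hessian_lower_bound a K C -> (2 <= K)%nat ->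
  in_relint K (two_point u0 u1 w) -> 4 * C <= Rpower u0 (a - 2) + Rpower u1 (a - 2).
Proof.
  intros HQ HK Hr; set (d := two_point 1 (- (1)) 0).
  assert (Sd : sumK K d = 0).
  { rewrite (sumK_first_two K _ 0); [cbn; ring | exact HK |].
    intros [| [| k]] Hk; [lia | lia | reflexivity]. }
  assert (Nd : norm1 K d = 2).
  { unfold norm1; rewrite (sumK_first_two K _ 0);
      [cbn; rewrite Rabs_Ropp, Rabs_R1; ring | exact HK |].
    intros [| [| k]] Hk; [lia | lia | apply Rabs_R0]. }
  assert (Qd : hessian_form a K (two_point u0 u1 w) d = Rpower u0 (a - 2) + Rpower u1 (a - 2)).
  { unfold hessian_form; rewrite (sumK_first_two K _ 0); [cbn; ring | exact HK |].
    intros [| [| k]] Hk; [lia | lia | cbn; ring]. }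
  pose proof (HQ _ d Hr Sd) as H; rewrite Nd, Qd in H; lra.
Qed.

Definition two_block (m : nat) (A B : R) (k : nat) : R := if Nat.ltb k m then A else B.

Lemma two_block_lt m A B k : (k < m)%nat -> two_block m A B k = A.
Proof. intros Hk; unfold two_block; destruct (Nat.ltb_spec k m); [reflexivity | lia]. Qed.

Lemma two_block_ge m A B k : (m <= k)%nat -> two_block m A B k = B.
Proof. intros Hk; unfold two_block; destruct (Nat.ltb_spec k m); [lia | reflexivity]. Qed.

Lemma sumK_two_block K m A B (f : R -> R) : (m <= K)%nat ->
  sumK K (fun k => f (two_block m A B k)) = INR m * f A + (INR K - INR m) * f B.
Proof.
  intros HmK; replace K with (m + (K - m))%nat at 1 by lia.
  rewrite sumK_app, (sumK_ext m _ (fun _ => f A)), (sumK_ext (K - m) _ (fun _ => f B)).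
  - rewrite !sumK_const, minus_INR by exact HmK; ring.
  - intros k _; rewrite two_block_ge by lia; reflexivity.
  - intros k Hk; rewrite two_block_lt by exact Hk; reflexivity.
Qed.

Lemma four_C_le_two_block a K C m A B : hessian_lower_bound a K C -> (1 <= m < K)%nat ->
  0 < A < 1 -> 0 < B < 1 -> INR m * A + (INR K - INR m) * B = 1 ->
  4 * C <= / INR m * Rpower A (a - 2) + / (INR K - INR m) * Rpower B (a - 2).
Proof.
  intros HQ HmK HA HB Hsum.
  assert (HM : 1 <= INR m) by (apply (le_INR 1); lia).
  assert (HN : 1 <= INR K - INR m) by (rewrite <- minus_INR by lia; apply (le_INR 1); lia).
  set (d := two_block m (/ INR m) (- / (INR K - INR m))).
  assert (Hr : in_relint K (two_block m A B)).
  { split; [intros k _; unfold two_block; destruct (Nat.ltb k m); assumption |].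
    etransitivity; [apply (sumK_two_block K m A B (fun y => y)); lia | exact Hsum]. }
  assert (Sd : sumK K d = 0).
  { etransitivity; [apply (sumK_two_block K m _ _ (fun y => y)); lia |]; field; lra. }
  assert (Nd : norm1 K d = 2).
  { unfold norm1, d; rewrite (sumK_two_block K m _ _ Rabs) by lia.
    rewrite Rabs_Ropp, !Rabs_right by (left; apply Rinv_0_lt_compat; lra); field; lra. }
  assert (Qd : hessian_form a K (two_block m A B) d
               = / INR m * Rpower A (a - 2) + / (INR K - INR m) * Rpower B (a - 2)).
  { unfold hessian_form, d; replace K with (m + (K - m))%nat at 1 by lia.
    rewrite sumK_app, (sumK_ext m _ (fun _ => Rpower A (a - 2) * (/ INR m) ^ 2)),
      (sumK_ext (K - m) _ (fun _ => Rpower B (a - 2) * (- / (INR K - INR m)) ^ 2)).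
    - rewrite !sumK_const, minus_INR by lia; field; lra.
    - intros k _; rewrite !two_block_ge by lia; reflexivity.
    - intros k Hk; rewrite !two_block_lt by exact Hk; reflexivity. }
  pose proof (HQ _ d Hr Sd) as H; rewrite Nd, Qd in H; lra.
Qed.

Lemma le_of_Rpower_small X Y c eta0 : 0 < c -> 0 < eta0 ->
  (forall eta, 0 < eta < eta0 -> X <= Y + Rpower eta c) -> X <= Y.
Proof.
  intros Hc H0 H; apply Rle_plus_epsilon; intros eps Heps.
  set (z := Rmin eps (Rpower (eta0 / 2) c)).
  assert (Hz : 0 < z) by (apply Rmin_pos; [lra | apply Rpower_gt0]).
  assert (Ez : Rpower (Rpower z (/ c)) c = z) by (rewrite Rpower_mult, Rinv_l, Rpower_1; lra).
  assert (Hlt : Rpower z (/ c) < eta0).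
  { apply (Rle_lt_trans _ (eta0 / 2)); [| lra].
    replace (eta0 / 2) with (Rpower (Rpower (eta0 / 2) c) (/ c))
      by (rewrite Rpower_mult, Rinv_r, Rpower_1; lra).
    apply Rle_Rpower_l; [left; apply Rinv_0_lt_compat, Hc | split; [exact Hz | apply Rmin_r]]. }
  specialize (H (Rpower z (/ c)) (conj (Rpower_gt0 _ _) Hlt)); rewrite Ez in H.
  assert (z <= eps) by apply Rmin_l; lra.
Qed.

Lemma four_C_le_half a K C : hessian_lower_bound a K C -> (2 <= K)%nat ->
  4 * C <= 2 * Rpower (/ 2) (a - 2).
Proof.
  intros HQ HK.
  assert (HK2 : 2 <= INR K) by (replace 2 with (INR 2) by (simpl; ring); apply le_INR, HK).
  set (h eta := (1 - (INR K - 2) * eta) / 2).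
  replace (/ 2) with (h 0) by (unfold h; field).
  apply (le_of_local_sup _ (fun eta => 2 * Rpower (h eta) (a - 2)) (/ INR K)).
  - apply Rinv_0_lt_compat; lra.
  - apply continuity_pt_of_ex_derive; unfold h; auto_derive; apply ex_derive_Rpower; lra.
  - intros t L Ht HL; apply (Rle_trans _ (2 * Rpower (h t) (a - 2))); [| apply HL; lra].
    assert (HtK : t * INR K < 1).
    { destruct Ht as [_ Ht]; apply (Rmult_lt_compat_r (INR K)) in Ht; [| lra].
      rewrite Rinv_l in Ht; lra. }
    replace (2 * Rpower (h t) (a - 2)) with (Rpower (h t) (a - 2) + Rpower (h t) (a - 2)) by ring.
    apply (four_C_le_two_point a K C (h t) (h t) t HQ HK).
    assert (0 < t < 1) by (split; [lra | nra]).
    assert (Hh : 0 < h t < 1) by (unfold h; split; nra).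
    apply in_relint_two_point; [exact HK | exact Hh | exact Hh | intros; assumption |].
    unfold h; field.
Qed.

Lemma four_C_le_one_K2 a C : 2 < a -> hessian_lower_bound a 2 C -> 4 * C <= 1.
Proof.
  intros Ha HQ; apply (le_of_Rpower_small _ 1 (a - 2) 1); [lra | lra |].
  intros eta Heta.
  pose proof (four_C_le_two_point a 2 C eta (1 - eta) 0 HQ (Nat.le_refl 2)) as H.
  assert (Rpower (1 - eta) (a - 2) <= 1)
    by (rewrite <- (Rpower_1_l (a - 2)) at 2; apply Rle_Rpower_l; lra).
  enough (in_relint 2 (two_point eta (1 - eta) 0)) by (specialize (H ltac:(assumption)); lra).
  apply in_relint_two_point; [lia | lra | lra | intros; lia | simpl; ring].
Qed.

Lemma C_nonpos_ge3 a K C : 2 < a -> (3 <= K)%nat -> hessian_lower_bound a K C -> C <= 0.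
Proof.
  intros Ha HK HQ.
  assert (HK3 : 3 <= INR K) by (replace 3 with (INR 3) by (simpl; ring); apply le_INR, HK).
  enough (2 * C <= 0) by lra.
  apply (le_of_Rpower_small _ 0 (a - 2) (/ 4)); [lra | lra |].
  intros eta Heta.
  pose proof (four_C_le_two_point a K C eta eta ((1 - 2 * eta) / (INR K - 2)) HQ ltac:(lia)) as H.
  enough (in_relint K (two_point eta eta ((1 - 2 * eta) / (INR K - 2))))
    by (specialize (H ltac:(assumption)); lra).
  apply in_relint_two_point; [lia | lra | lra | intros _; split | field; lra].
  - apply Rdiv_lt_0_compat; lra.
  - apply (Rmult_lt_reg_r (INR K - 2)); [lra |]; unfold Rdiv; rewrite Rmult_assoc, Rinv_l; lra.
Qed.

Lemma block_curvature_eq a M u S : 1 < a <= 2 -> 1 <= M -> 0 < u -> 0 < S ->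
  u = Rpower M ((1 - a) / (3 - a)) ->
  / M * Rpower (u / S / M) (a - 2) = u / S * Rpower S (3 - a).
Proof.
  intros Ha HM Hu HS Eu.
  assert (Hc : 0 < u / S) by (apply Rdiv_lt_0_compat; assumption).
  replace (Rpower (u / S / M) (a - 2)) with (/ Rpower (u / S / M) (2 - a))
    by (rewrite <- Rpower_Ropp; f_equal; ring).
  rewrite <- Rinv_mult, Rinv_mul_Rpower_div by lra.
  replace ((2 - a - 1) / (1 + (2 - a))) with ((1 - a) / (3 - a)) by (field; lra).
  rewrite <- Eu; replace (u / (u / S)) with S by (field; lra).
  replace (1 + (2 - a)) with (3 - a) by ring; reflexivity.
Qed.

Lemma four_C_le_mid a K C : 1 < a <= 2 -> (2 <= K)%nat -> hessian_lower_bound a K C ->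
  4 * C <= 4 * C_const a K.
Proof.
  intros Ha HK HQ.
  pose proof (Nat.div_mod K 2 ltac:(lia)); pose proof (Nat.mod_upper_bound K 2 ltac:(lia)).
  rewrite (C_const_mid a Ha K HK).
  set (m := (K / 2)%nat) in *.
  set (N := INR K - INR m); set (M := INR m).
  assert (HM : 1 <= M) by (apply (le_INR 1); lia).
  assert (HN : 1 <= N) by (unfold N; rewrite <- minus_INR by lia; apply (le_INR 1); lia).
  set (u := Rpower M ((1 - a) / (3 - a))); set (v := Rpower N ((1 - a) / (3 - a))).
  assert (Hu : 0 < u) by apply Rpower_gt0; assert (Hv : 0 < v) by apply Rpower_gt0.
  (* the equality case of [split_bound_mid]: block masses [u / (u + v)] and [v / (u + v)] *)
  set (A := u / (u + v) / M); set (B := v / (u + v) / N).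
  replace (Rpower (u + v) (3 - a)) with (/ M * Rpower A (a - 2) + / N * Rpower B (a - 2)).
  2: { unfold A, B; rewrite !block_curvature_eq by (reflexivity || lra); field; lra. }
  assert (EA : A * ((u + v) * M) = u) by (unfold A; field; lra).
  assert (EB : B * ((u + v) * N) = v) by (unfold B; field; lra).
  assert (HuM : u < (u + v) * M) by nra; assert (HvN : v < (u + v) * N) by nra.
  apply four_C_le_two_block; [exact HQ | lia | split | split |].
  - unfold A; repeat apply Rdiv_lt_0_compat; lra.
  - nra.
  - unfold B; repeat apply Rdiv_lt_0_compat; lra.
  - nra.
  - fold N M; unfold A, B; field; lra.
Qed.

Lemma C_le_C_const a K C : (2 <= K)%nat -> hessian_lower_bound a K C -> C <= C_const a K.
Proof.
  intros HK HQ.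
  destruct (Rle_dec a 1) as [Ha1 | Ha1].
  { pose proof (four_C_le_half a K C HQ HK) as H; rewrite Rpower_half_eq in H.
    rewrite C_const_le1 by exact Ha1; lra. }
  destruct (Rle_dec a 2) as [Ha2 | Ha2].
  { pose proof (four_C_le_mid a K C ltac:(lra) HK HQ); lra. }
  destruct (Nat.eq_dec K 2) as [-> | HK2].
  - rewrite C_const_two by lra; destruct (Rle_dec a 3) as [Ha3 | Ha3].
    + pose proof (four_C_le_one_K2 a C ltac:(lra) HQ).
      rewrite Rmax_right by lra; replace (1 - 3) with (- (1 + 1)) by ring.
      rewrite Rpower_Ropp, Rpower_plus, Rpower_1 by lra; lra.
    + pose proof (four_C_le_half a 2 C HQ HK) as H; rewrite Rpower_half_eq in H.
      rewrite Rmax_left by lra; lra.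
  - rewrite C_const_ge3 by (lra || lia); apply (C_nonpos_ge3 a K); [lra | lia | exact HQ].
Qed.

Theorem corollary1 (K : nat) (alpha : R) (HK : (2 <= K)%nat) :
  negS_strongly_convex alpha K (C_const alpha K) /\
  (forall C : R, negS_strongly_convex alpha K C -> C <= C_const alpha K).
Proof.
  split.
  - apply negS_strongly_convex_of_hessian, hessian_lower_bound_C_const, HK.
  - intros C HC; apply C_le_C_const; [exact HK |].
    apply hessian_lower_bound_of_negS_strongly_convex, HC.
Qed.
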